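(* Let $a_1,\dots,a_m$ be vectors in $\mathbb R^n$ equipped with a Euclidean norm $\lVert\cdot\rVert$, and suppose $\mathrm{MinHeight}(a_1,\dots,a_m)>0$. Then every $w\in\mathrm{span}(a_1,\dots,a_m)$ can be written as $w=\lambda_1a_1+\dots+\lambda_ma_m$ with $|\lambda_j|\le \lVert w\rVert/\mathrm{MinHeight}(a_1,\dots,a_m)$ for every $j\in\{1,\dots,m\}$.
   Context: $\mathrm{MinHeight}(a_1,\dots,a_m):=\min_{j}\,d\big(a_j,\mathrm{span}(a_1,\dots,\widehat{a}_j,\dots,a_m)\big)$, where $d$ is the distance induced by $\lVert\cdot\rVert$ and $\widehat a_j$ means $a_j$ is omitted. *)

From HB Require Import structures.
From mathcomp Require Import all_boot all_order all_algebra.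
From mathcomp Require Import boolp classical_sets reals.
Set Implicit Arguments. Unset Strict Implicit. Unset Printing Implicit Defensive.
Import Order.TTheory GRing.Theory Num.Theory.
Local Open Scope ring_scope.
Local Open Scope classical_set_scope.

Definition normE {R : realType} {n : nat} (v : 'rV[R]_n) : R :=
  Num.sqrt (\sum_(i < n) v 0 i ^+ 2).

Definition span_of {R : realType} {n m : nat} (a : 'I_m -> 'rV[R]_n) : set 'rV[R]_n :=
  [set w | exists c : 'I_m -> R, w = \sum_(k < m) c k *: a k].

Definition span_others {R : realType} {n m : nat} (a : 'I_m -> 'rV[R]_n) (j : 'I_m)
  : set 'rV[R]_n :=
  [set y | exists c : 'I_m -> R, y = \sum_(k < m | k != j) c k *: a k].

Definition dist_set {R : realType} {n : nat} (x : 'rV[R]_n) (S : set 'rV[R]_n) : R :=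
  inf [set normE (x - y) | y in S].

Definition MinHeight {R : realType} {n m : nat} (a : 'I_m -> 'rV[R]_n) : R :=
  inf [set dist_set (a j) (span_others a j) | j in [set: 'I_m]].

From HB Require Import structures.
From mathcomp Require Import all_boot all_order all_algebra.
From mathcomp Require Import boolp classical_sets reals.
Import Order.TTheory GRing.Theory Num.Theory.
Local Open Scope ring_scope.

(* Take any representation w = sum_k c_k a_k.  If c_j <> 0, then
   w / c_j = a_j - y with y in the span of the other vectors, so
   ||w|| / |c_j| >= d(a_j, span of the others) >= MinHeight. *)

Section Heights.

Variables (R : realType) (n : nat).
Implicit Types (v x y : 'rV[R]_n) (S : set 'rV[R]_n).

Lemma normE_ge0 v : 0 <= normE v.
Proof. exact: sqrtr_ge0. Qed.

Lemma normEZ (l : R) v : normE (l *: v) = `|l| * normE v.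
Proof.
rewrite /normE -sqrtr_sqr -sqrtrM ?sqr_ge0 //; congr Num.sqrt.
by rewrite mulr_sumr; apply: eq_bigr => i _; rewrite mxE exprMn.
Qed.

Lemma dist_set_ge0 x S : 0 <= dist_set x S.
Proof.
have [->|/set0P [y Sy]] := eqVneq S set0; first by rewrite /dist_set image_set0 inf0.
apply: lb_le_inf; first by exists (normE (x - y)), y.
by move=> _ [z _ <-]; apply: normE_ge0.
Qed.

Lemma dist_set_le x y S : S y -> dist_set x S <= normE (x - y).
Proof.
move=> Sy; apply: ge_inf; last by exists y.
by exists 0 => _ [z _ <-]; apply: normE_ge0.
Qed.

Variables (m : nat) (a : 'I_m -> 'rV[R]_n).

Lemma MinHeight_le_dist j : MinHeight a <= dist_set (a j) (span_others a j).
Proof.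
apply: ge_inf; last by exists j.
by exists 0 => _ [k _ <-]; apply: dist_set_ge0.
Qed.

Lemma lincomb_factor (c : 'I_m -> R) j : c j != 0 ->
  \sum_(k < m) c k *: a k =
  c j *: (a j - \sum_(k < m | k != j) (- c k / c j) *: a k).
Proof.
move=> cj0; rewrite (bigD1 j) //= scalerBr scaler_sumr -sumrN; congr (_ + _).
by apply: eq_bigr => k _; rewrite scalerA mulrCA divff // mulr1 scaleNr opprK.
Qed.

Lemma coef_mul_dist_le (c : 'I_m -> R) j :
  `|c j| * dist_set (a j) (span_others a j) <= normE (\sum_(k < m) c k *: a k).
Proof.
have [->|cj0] := eqVneq (c j) 0; first by rewrite normr0 mul0r normE_ge0.
rewrite (lincomb_factor c j cj0) normEZ ler_wpM2l //.
by apply: dist_set_le; exists (fun k => - c k / c j).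
Qed.

Lemma coef_mul_MinHeight_le (c : 'I_m -> R) j :
  `|c j| * MinHeight a <= normE (\sum_(k < m) c k *: a k).
Proof.
apply: le_trans (coef_mul_dist_le c j).
by rewrite ler_wpM2l // MinHeight_le_dist.
Qed.

End Heights.

Theorem mainTheorem7 (R : realType) (n m : nat) (a : 'I_m -> 'rV[R]_n) :
  0 < MinHeight a ->
  forall w : 'rV[R]_n, span_of a w ->
  exists lam : 'I_m -> R,
    w = \sum_(j < m) lam j *: a j /\
    (forall j : 'I_m, `|lam j| <= normE w / MinHeight a).
Proof.
move=> hM _ [c ->]; exists c; split => // j.
by rewrite ler_pdivlMr // coef_mul_MinHeight_le.
Qed.
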